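(* Let $(a_n)_{n\ge1}$ be a sequence of real numbers with $\lim_{n\to\infty}a_n=\infty$, and let $\gamma>0$. Then there exists a sequence of positive integers $(r_n)_{n\ge0}$ such that $$\limsup_{n\to\infty}\frac{2^{n+1}a_n}{\sum_{i=1}^{n}2^i\,r_0r_1\cdots r_{i-1}}=\gamma.$$ Here the denominator is $2r_0+4r_0r_1+\dots+2^nr_0\cdots r_{n-1}$. *)

From Stdlib Require Import Reals Lra Lia.
Open Scope R_scope.

Fixpoint prod_r (r : nat -> nat) (i : nat) : R :=
  match i with
  | O => 1
  | S k => prod_r r k * INR (r k)
  end.

Fixpoint denom (r : nat -> nat) (n : nat) : R :=
  match n with
  | O => 0
  | S k => denom r k + 2 ^ (S k) * prod_r r (S k)
  end.

Definition limsup_eq (u : nat -> R) (L : R) : Prop :=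
  (forall eps : R, eps > 0 -> exists N : nat, forall n : nat, (n >= N)%nat -> u n < L + eps) /\
  (forall eps : R, eps > 0 -> forall N : nat, exists n : nat, (n >= N)%nat /\ u n > L - eps).

From Stdlib Require Import Reals Lra Lia ZArith ClassicalEpsilon.
Open Scope R_scope.

(* Write u_n = 2^(n+1) a_n / denom r n.  The digits r are built in blocks.
   A block starting at index J consists of one digit r_J = K followed by
   m digits equal to 1; on it the denominator is affine in K:
     denom r (J+1+i) = D + K P Q_i,  D = denom r J,  P = r_0...r_{J-1},
     Q_i = 2^(J+2+i) - 2^(J+1)                             (denom_block).
   Hence u_(J+1+i) < gamma iff lam_i := (2^(J+2+i) a_(J+1+i)/gamma - D)/Q_i
   is below K P, and u_(J+1+i) >= gamma (1 - 1/K) when (K-1) P <= lam_i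
   (ratio_below, ratio_above).  Since a_n -> oo, the lam_i are unbounded,
   so we may choose the block length m such that L = max_(i<=m) lam_i is at
   least (J+1) P, and then the least integer K > L/P.  Then every u_n of the
   block is < gamma, while at the index realising L we get u_n close to
   gamma, because K > J+1 grows with the blocks. *)

Lemma prod_r_ext (r r' : nat -> nat) (n : nat) :
  (forall i, (i < n)%nat -> r i = r' i) -> prod_r r n = prod_r r' n.
Proof.
  induction n as [|n IH]; intros Hrr'; [reflexivity|].
  cbn [prod_r]. rewrite (IH (fun i Hi => Hrr' i ltac:(lia))), (Hrr' n) by lia.
  reflexivity.
Qed.

Lemma denom_ext (r r' : nat -> nat) (n : nat) :
  (forall i, (i < n)%nat -> r i = r' i) -> denom r n = denom r' n.
Proof.
  induction n as [|n IH]; intros Hrr'; [reflexivity|].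
  cbn [denom]. rewrite (IH (fun i Hi => Hrr' i ltac:(lia))), (prod_r_ext r r' (S n)) by
    (intros; apply Hrr'; lia).
  reflexivity.
Qed.

Lemma prod_r_ge1 (r : nat -> nat) (n : nat) :
  (forall i, (r i >= 1)%nat) -> 1 <= prod_r r n.
Proof.
  intros Hr. induction n as [|n IH]; cbn [prod_r]; [lra|].
  assert (1 <= INR (r n)) by (apply (le_INR 1), Hr). nra.
Qed.

Lemma denom_nonneg (r : nat -> nat) (n : nat) :
  (forall i, (r i >= 1)%nat) -> 0 <= denom r n.
Proof.
  intros Hr. induction n as [|n IH]; cbn [denom]; [lra|].
  pose proof (prod_r_ge1 r (S n) Hr). pose proof (pow_lt 2 (S n) ltac:(lra)). nra.
Qed.

Definition block_gap (J i : nat) : R := 2 ^ S (S J + i) - 2 ^ S J.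

Lemma block_gap_pos (J i : nat) : 0 < block_gap J i.
Proof.
  unfold block_gap. assert (2 ^ S J < 2 ^ S (S J + i)) by (apply Rlt_pow; [lra | lia]).
  lra.
Qed.

Lemma denom_block (r : nat -> nat) (J m : nat) :
  (forall i, (J < i <= J + m)%nat -> r i = 1%nat) ->
  forall i, (i <= m)%nat ->
    prod_r r (S J + i) = INR (r J) * prod_r r J /\
    denom r (S J + i) = denom r J + INR (r J) * prod_r r J * block_gap J i.
Proof.
  intros Hones i. unfold block_gap.
  induction i as [|i IH]; intros Hi.
  - rewrite Nat.add_0_r. cbn [prod_r denom]. split; [ring|]. simpl. ring.
  - destruct IH as [IHprod IHdenom]; [lia|].
    replace (S J + S i)%nat with (S (S J + i)) by lia.
    assert (Hone : r (S J + i)%nat = 1%nat) by (apply Hones; lia).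
    cbn [prod_r denom]. rewrite Hone, IHprod, IHdenom. simpl INR.
    split; [ring|]. simpl. ring.
Qed.

Fixpoint max_upto (f : nat -> R) (m : nat) : R :=
  match m with
  | O => f O
  | S m' => Rmax (max_upto f m') (f m)
  end.

Lemma max_upto_ge (f : nat -> R) (m i : nat) : (i <= m)%nat -> f i <= max_upto f m.
Proof.
  induction m as [|m IH]; intros Hi; cbn [max_upto].
  - replace i with 0%nat by lia. lra.
  - destruct (Nat.eq_dec i (S m)) as [->|Hne]; [apply Rmax_r|].
    eapply Rle_trans; [apply IH; lia | apply Rmax_l].
Qed.

Lemma max_upto_attained (f : nat -> R) (m : nat) :
  exists i, (i <= m)%nat /\ max_upto f m = f i.
Proof.
  induction m as [|m [i [Hi Heq]]]; [exists 0%nat; split; [lia | reflexivity]|].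
  cbn [max_upto]. unfold Rmax. destruct (Rle_dec _ _).
  - exists (S m). split; [lia | reflexivity].
  - exists i. split; [lia | exact Heq].
Qed.

Definition nat_above (x : R) : nat := Z.to_nat (up x).

Lemma nat_above_spec (x : R) : 0 <= x -> x < INR (nat_above x) <= x + 1.
Proof.
  intros Hx. destruct (archimed x) as [Hup1 Hup2].
  assert (Hpos : (0 < up x)%Z) by (apply lt_0_IZR; lra).
  unfold nat_above. rewrite INR_IZR_INZ, Z2Nat.id by lia. lra.
Qed.

Lemma ratio_below (gamma D Q M e : R) :
  0 < gamma -> 0 <= D -> 0 < Q -> 0 < M ->
  (e / gamma - D) / Q < M -> e / (D + M * Q) < gamma.
Proof.
  intros Hg HD HQ HM Hlam.
  set (lam := (e / gamma - D) / Q) in Hlam.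
  assert (He : e = gamma * (D + lam * Q)) by (unfold lam; field; lra).
  assert (HB : 0 < D + M * Q) by nra.
  apply (Rmult_lt_reg_r (D + M * Q)); [exact HB|].
  replace (e / (D + M * Q) * (D + M * Q)) with e by (field; lra). rewrite He.
  apply Rmult_lt_compat_l; [exact Hg|].
  assert (lam * Q < M * Q) by (apply Rmult_lt_compat_r; lra). lra.
Qed.

Lemma ratio_above (gamma D Q P K e : R) :
  0 < gamma -> 0 <= D -> 0 < Q -> 0 < P -> 1 <= K ->
  (K - 1) * P <= (e / gamma - D) / Q -> gamma * (1 - / K) <= e / (D + K * P * Q).
Proof.
  intros Hg HD HQ HP HK Hlam.
  set (lam := (e / gamma - D) / Q) in Hlam.
  assert (He : e = gamma * (D + lam * Q)) by (unfold lam; field; lra).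
  assert (HB : 0 < D + K * P * Q).
  { assert (0 < K * P * Q) by (repeat apply Rmult_lt_0_compat; lra). lra. }
  assert (HinvK : 0 < / K) by (apply Rinv_0_lt_compat; lra).
  apply (Rmult_le_reg_r (D + K * P * Q)); [exact HB|].
  replace (e / (D + K * P * Q) * (D + K * P * Q)) with e by (field; lra). rewrite He.
  replace (gamma * (1 - / K) * (D + K * P * Q))
    with (gamma * (D + (K - 1) * P * Q) - gamma * D * / K) by (field; lra).
  assert (0 <= gamma * D * / K) by (apply Rmult_le_pos; nra).
  assert ((K - 1) * P * Q <= lam * Q) by (apply Rmult_le_compat_r; lra).
  nra.
Qed.

Lemma shortfall_small (gamma eps K : R) :
  0 < gamma -> 0 < eps -> gamma / eps < K -> gamma - eps < gamma * (1 - / K).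
Proof.
  intros Hg Heps HK.
  assert (Hratio : 0 < gamma / eps) by (apply Rdiv_lt_0_compat; lra).
  assert (Hgamma : gamma < eps * K).
  { replace gamma with (eps * (gamma / eps)) at 1 by (field; lra).
    apply Rmult_lt_compat_l; lra. }
  assert (Hloss : gamma * / K < eps).
  { apply (Rmult_lt_reg_r K); [lra|].
    replace (gamma * / K * K) with gamma by (field; lra). exact Hgamma. }
  lra.
Qed.

Section BlockConstruction.

Variable a : nat -> R.
Variable gamma : R.
Hypothesis a_unbounded : cv_infty a.
Hypothesis gamma_pos : gamma > 0.

(* lam J D i: the threshold for K P below which u_(J+1+i) exceeds gamma. *)
Definition lam (J : nat) (D : R) (i : nat) : R :=
  (2 ^ S (S J + i) * a (S J + i) / gamma - D) / block_gap J i.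

Lemma lam_unbounded (J : nat) (D A : R) : 0 <= A -> exists i, A <= lam J D i.
Proof.
  intros HA.
  destruct (a_unbounded (gamma * (A + Rabs D))) as [N HN].
  exists N. unfold lam.
  specialize (HN (S J + N)%nat ltac:(lia)).
  pose proof (block_gap_pos J N) as Hgap. unfold block_gap in *.
  set (y := a (S J + N)%nat) in *.
  set (p := 2 ^ S (S J + N)) in *. set (q := 2 ^ S J) in *.
  assert (Hq : 0 < q) by (apply pow_lt; lra).
  assert (Hp : 1 <= p) by (apply pow_R1_Rle; lra).
  assert (Hy : A + Rabs D < y / gamma).
  { apply (Rmult_lt_reg_l gamma); [lra|]. field_simplify; lra. }
  assert (Hnum : A * (p - q) <= p * y / gamma - D).
  { replace (p * y / gamma) with (p * (y / gamma)) by (field; lra).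
    pose proof (Rle_abs D). pose proof (Rabs_pos D). nra. }
  apply (Rmult_le_reg_r (p - q)); [lra|].
  replace ((p * y / gamma - D) / (p - q) * (p - q)) with (p * y / gamma - D) by (field; lra).
  lra.
Qed.

(* A stage of the construction: the start J of the next block and the digits
   fixed so far (all digits from J on are still 1). *)
Record stage := mkStage { start : nat; digits : nat -> nat }.

Definition stage_denom (s : stage) : R := denom (digits s) (start s).
Definition stage_prod (s : stage) : R := prod_r (digits s) (start s).

Definition block_len (s : stage) : nat :=
  epsilon (inhabits 0%nat)
    (fun m => INR (S (start s)) * stage_prod s <= max_upto (lam (start s) (stage_denom s)) m).

Definition block_peak (s : stage) : R :=
  max_upto (lam (start s) (stage_denom s)) (block_len s).

Definition block_digit (s : stage) : nat := nat_above (block_peak s / stage_prod s).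

Definition next_stage (s : stage) : stage :=
  mkStage (S (start s) + block_len s)
          (fun i => if Nat.eq_dec i (start s) then block_digit s else digits s i).

Fixpoint stage_at (j : nat) : stage :=
  match j with
  | O => mkStage 0 (fun _ => 1%nat)
  | S j' => next_stage (stage_at j')
  end.

(* The digit r_i is final once stage i+1 is reached, since start > i there. *)
Definition digits_limit (i : nat) : nat := digits (stage_at (S i)) i.

(* The choice of the block length is possible because lam is unbounded. *)
Lemma block_peak_large (s : stage) :
  0 <= stage_prod s -> INR (S (start s)) * stage_prod s <= block_peak s.
Proof.
  intros HP. unfold block_peak, block_len. apply epsilon_spec.
  assert (HA : 0 <= INR (S (start s)) * stage_prod s) by (apply Rmult_le_pos; [apply pos_INR | exact HP]).
  destruct (lam_unbounded (start s) (stage_denom s) _ HA) as [i Hi].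
  exists i. eapply Rle_trans; [exact Hi | apply max_upto_ge; lia].
Qed.

(* K P exceeds L by at most P, and K > J + 1 because L >= (J+1) P. *)
Lemma block_digit_spec (s : stage) :
  1 <= stage_prod s ->
  block_peak s < INR (block_digit s) * stage_prod s /\
  (INR (block_digit s) - 1) * stage_prod s <= block_peak s /\
  (S (start s) < block_digit s)%nat.
Proof.
  intros HP. pose proof (block_peak_large s ltac:(lra)) as Hpeak.
  assert (Hratio : INR (S (start s)) <= block_peak s / stage_prod s).
  { apply (Rmult_le_reg_r (stage_prod s)); [lra|].
    unfold Rdiv. rewrite Rmult_assoc, Rinv_l, Rmult_1_r by lra. exact Hpeak. }
  destruct (nat_above_spec (block_peak s / stage_prod s)) as [Hlow Hhigh].
  { pose proof (pos_INR (S (start s))). lra. }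
  fold (block_digit s) in Hlow, Hhigh.
  assert (Hpeak_eq : block_peak s = block_peak s / stage_prod s * stage_prod s) by (field; lra).
  split; [|split].
  - rewrite Hpeak_eq. apply Rmult_lt_compat_r; lra.
  - rewrite Hpeak_eq. apply Rmult_le_compat_r; lra.
  - apply INR_lt. lra.
Qed.

Lemma stage_start_ge (j : nat) : (j <= start (stage_at j))%nat.
Proof. induction j as [|j IH]; cbn [stage_at start next_stage]; lia. Qed.

Lemma stage_start_mono (j j' : nat) :
  (j <= j')%nat -> (start (stage_at j) <= start (stage_at j'))%nat.
Proof. intros Hjj'. induction Hjj'; cbn [stage_at start next_stage]; lia. Qed.

Lemma stage_digits_tail (j i : nat) :
  (start (stage_at j) <= i)%nat -> digits (stage_at j) i = 1%nat.
Proof.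
  revert i. induction j as [|j IH]; intros i Hi; [reflexivity|].
  cbn [stage_at next_stage start digits] in *.
  destruct (Nat.eq_dec i (start (stage_at j))); [lia|]. apply IH. lia.
Qed.

Lemma stage_digits_pos (j i : nat) : (digits (stage_at j) i >= 1)%nat.
Proof.
  revert i. induction j as [|j IH]; intros i; cbn [stage_at next_stage digits]; [lia|].
  destruct (Nat.eq_dec i (start (stage_at j))); [|apply IH].
  destruct (block_digit_spec (stage_at j)) as [_ [_ Hdigit]]; [|lia].
  apply prod_r_ge1, IH.
Qed.

Lemma stage_prod_ge1 (j : nat) : 1 <= stage_prod (stage_at j).
Proof. apply prod_r_ge1, stage_digits_pos. Qed.

Lemma block_digit_large (j : nat) : (S (start (stage_at j)) < block_digit (stage_at j))%nat.
Proof. apply block_digit_spec, stage_prod_ge1. Qed.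

Lemma stage_digits_stable (j j' i : nat) :
  (j <= j')%nat -> (i < start (stage_at j))%nat ->
  digits (stage_at j') i = digits (stage_at j) i.
Proof.
  intros Hjj' Hi. induction Hjj' as [|j' Hjj' IH]; [reflexivity|].
  cbn [stage_at next_stage digits].
  pose proof (stage_start_mono j j' Hjj').
  destruct (Nat.eq_dec i (start (stage_at j'))); [lia | exact IH].
Qed.

Lemma digits_limit_agrees (j i : nat) :
  (i < start (stage_at j))%nat -> digits_limit i = digits (stage_at j) i.
Proof.
  intros Hi. unfold digits_limit.
  pose proof (stage_start_ge (S i)).
  rewrite <- (stage_digits_stable (S i) (Nat.max j (S i)) i) by lia.
  apply stage_digits_stable; lia.
Qed.

Lemma digits_limit_pos (i : nat) : (digits_limit i >= 1)%nat.
Proof. apply stage_digits_pos. Qed.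

Lemma denom_in_block (j i : nat) :
  let s := stage_at j in
  (i <= block_len s)%nat ->
  denom digits_limit (S (start s) + i) =
  stage_denom s + INR (block_digit s) * stage_prod s * block_gap (start s) i.
Proof.
  intros s Hi.
  set (s' := next_stage s).
  assert (Hagree : forall k, (k < start s)%nat -> digits s' k = digits s k).
  { intros k Hk. cbn [s' next_stage digits]. destruct (Nat.eq_dec k (start s)); [lia | reflexivity]. }
  rewrite (denom_ext _ (digits s')) by
    (intros k Hk; apply (digits_limit_agrees (S j)); cbn [stage_at]; fold s; fold s';
     cbn [s' next_stage start]; lia).
  destruct (denom_block (digits s') (start s) (block_len s)) with (i := i) as [_ Hdenom];
    [| exact Hi |].
  { intros k Hk. cbn [s' next_stage digits].
    destruct (Nat.eq_dec k (start s)); [lia|]. apply (stage_digits_tail j). fold s. lia. }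
  rewrite Hdenom. unfold stage_denom, stage_prod.
  rewrite (denom_ext (digits s') (digits s)), (prod_r_ext (digits s') (digits s)) by exact Hagree.
  cbn [s' next_stage digits]. destruct (Nat.eq_dec (start s) (start s)); [reflexivity | lia].
Qed.

Lemma block_cover (n : nat) : (1 <= n)%nat ->
  exists j i, (i <= block_len (stage_at j))%nat /\ n = (S (start (stage_at j)) + i)%nat.
Proof.
  intros Hn. pose proof (stage_start_ge n) as Hstart. revert Hstart.
  generalize n at 2 as j.
  induction j as [|j IH]; intros Hnj; [cbn in Hnj; lia|].
  destruct (le_lt_dec n (start (stage_at j))) as [Hle|Hlt]; [exact (IH Hle)|].
  cbn [stage_at next_stage start] in Hnj.
  exists j, (n - S (start (stage_at j)))%nat. split; lia.
Qed.

Definition ratio (r : nat -> nat) (n : nat) : R := 2 ^ S n * a n / denom r n.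

Lemma ratio_lt_gamma (n : nat) : (1 <= n)%nat -> ratio digits_limit n < gamma.
Proof.
  intros Hn. destruct (block_cover n Hn) as [j [i [Hi ->]]].
  unfold ratio. rewrite (denom_in_block j i Hi).
  pose proof (stage_prod_ge1 j) as HP. pose proof (block_digit_large j) as HK.
  set (s := stage_at j) in *.
  destruct (block_digit_spec s HP) as [Hpeak _].
  pose proof (max_upto_ge (lam (start s) (stage_denom s)) (block_len s) i Hi) as Hlam.
  apply ratio_below; try lra.
  - apply denom_nonneg, stage_digits_pos.
  - apply block_gap_pos.
  - assert (1 <= INR (block_digit s)) by (apply (le_INR 1); lia). nra.
  - fold (block_peak s) in Hlam. unfold lam in Hlam. lra.
Qed.

Lemma ratio_peak_in_block (j : nat) :
  exists n, (start (stage_at j) < n)%nat /\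
    gamma * (1 - / INR (block_digit (stage_at j))) <= ratio digits_limit n.
Proof.
  pose proof (stage_prod_ge1 j) as HP. pose proof (block_digit_large j) as HK.
  destruct (max_upto_attained (lam (start (stage_at j)) (stage_denom (stage_at j)))
              (block_len (stage_at j))) as [i [Hi Hmax]].
  exists (S (start (stage_at j)) + i)%nat. split; [lia|].
  unfold ratio. rewrite (denom_in_block j i Hi).
  set (s := stage_at j) in *.
  destruct (block_digit_spec s HP) as [_ [Hpeak _]].
  apply ratio_above; try lra.
  - apply denom_nonneg, stage_digits_pos.
  - apply block_gap_pos.
  - apply (le_INR 1). lia.
  - fold (block_peak s) in Hmax. unfold lam in Hmax. lra.
Qed.

End BlockConstruction.

Theorem mainTheorem13 (a : nat -> R) (gamma : R) :
  cv_infty a -> gamma > 0 ->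
  exists r : nat -> nat,
    (forall n : nat, (r n >= 1)%nat) /\
    limsup_eq (fun n => 2 ^ (S n) * a n / denom r n) gamma.
Proof.
  intros Ha Hg.
  exists (digits_limit a gamma). split; [exact (digits_limit_pos a gamma Ha Hg)|]. split.
  - intros eps Heps. exists 1%nat. intros n Hn.
    pose proof (ratio_lt_gamma a gamma Ha Hg n Hn). unfold ratio in *. lra.
  - intros eps Heps N.
    set (j := Nat.max N (nat_above (gamma / eps))).
    destruct (ratio_peak_in_block a gamma Ha Hg j) as [n [Hn Hpeak]].
    pose proof (stage_start_ge a gamma j).
    exists n. split; [lia|].
    (* K > J + 1 > j >= nat_above (gamma/eps) > gamma/eps *)
    assert (Hratio : 0 < gamma / eps) by (apply Rdiv_lt_0_compat; lra).
    destruct (nat_above_spec (gamma / eps)) as [Habove _]; [lra|].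
    pose proof (block_digit_large a gamma Ha Hg j).
    assert (INR (nat_above (gamma / eps)) <= INR (block_digit a gamma (stage_at a gamma j)))
      by (apply le_INR; lia).
    pose proof (shortfall_small gamma eps (INR (block_digit a gamma (stage_at a gamma j))) Hg Heps
      ltac:(lra)).
    unfold ratio in Hpeak. lra.
Qed.
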